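(* Suppose $X$ has well-defined scattered $\Pi_1$-products and $A$ is a homotopy cut-set for paths $\alpha,\beta:[0,1]\to X$. Then either $\alpha\simeq\beta$, or there is a perfect set $P\subseteq A$ such that (1) $B=P\cup\{0,1\}$ is a homotopy cut-set for $\alpha$ and $\beta$, and (2) whenever $(c,d)\in\mathcal{I}(B)$ contains $(a,b)\in\mathcal{I}(A)$, we have $\alpha|_{[c,a]}\simeq\beta|_{[c,a]}$ if $c<a$ and $\alpha|_{[b,d]}\simeq\beta|_{[b,d]}$ if $b<d$.
   Context: $\simeq$ is path-homotopy. For a compact set $A\subseteq\mathbb{R}$, $\mathcal{I}(A)$ is the set of connected components of $[\min A,\max A]\setminus A$. For paths $\alpha,\beta:[s,t]\to X$, a set $A\subseteq[s,t]$ is a homotopy cut-set for $\alpha,\beta$ if $A$ is closed, nowhere dense, contains $\{s,t\}$, $\alpha|_A=\beta|_A$, and $\alpha|_{[a,b]}\simeq\beta|_{[a,b]}$ for every $(a,b)\in\mathcal{I}(A)$. $X$ has well-defined scattered $\Pi_1$-products if any two paths $[0,1]\to X$ admitting a scattered homotopy cut-set are path-homotopic. A set is perfect if it is closed and has no isolated points. *)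

From Stdlib Require Import Reals Lra Classical.
Open Scope R_scope.

Record Topology (X : Type) := {
  is_open : (X -> Prop) -> Prop;
  open_full : is_open (fun _ => True);
  open_inter : forall U V, is_open U -> is_open V -> is_open (fun x => U x /\ V x);
  open_union : forall (F : (X -> Prop) -> Prop),
      (forall U, F U -> is_open U) -> is_open (fun x => exists U, F U /\ U x)
}.
Arguments is_open {X} _ _.

(* A path [s,t] -> X is represented by a function R -> X continuous on [s,t]
   (w.r.t. the subspace topology of [s,t]); values outside [s,t] are irrelevant. *)
Definition path {X : Type} (T : Topology X) (s t : R) (f : R -> X) : Prop :=
  s <= t /\
  forall U, is_open T U -> forall x, s <= x <= t -> U (f x) ->
    exists eps, eps > 0 /\
      forall y, s <= y <= t -> Rabs (y - x) < eps -> U (f y).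

(* Path homotopy (rel endpoints) between alpha|_[a,b] and beta|_[a,b].
   H is continuous on [a,b] x [0,1] (product topology, i.e. the max metric). *)
Definition path_homotopic {X : Type} (T : Topology X) (a b : R)
    (alpha beta : R -> X) : Prop :=
  exists H : R -> R -> X,
    (forall U, is_open T U -> forall x u, a <= x <= b -> 0 <= u <= 1 -> U (H x u) ->
       exists eps, eps > 0 /\
         forall y v, a <= y <= b -> 0 <= v <= 1 ->
           Rabs (y - x) < eps -> Rabs (v - u) < eps -> U (H y v)) /\
    (forall x, a <= x <= b -> H x 0 = alpha x) /\
    (forall x, a <= x <= b -> H x 1 = beta x) /\
    (forall u, 0 <= u <= 1 -> H a u = alpha a) /\
    (forall u, 0 <= u <= 1 -> H b u = alpha b).

Definition closure (A : R -> Prop) (x : R) : Prop :=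
  forall eps, eps > 0 -> exists y, A y /\ Rabs (y - x) < eps.

Definition closedR (A : R -> Prop) : Prop :=
  forall x, closure A x -> A x.

Definition nowhere_dense (A : R -> Prop) : Prop :=
  ~ exists x eps, eps > 0 /\ forall y, Rabs (y - x) < eps -> closure A y.

Definition scattered (A : R -> Prop) : Prop :=
  forall S : R -> Prop, (forall x, S x -> A x) -> (exists x, S x) ->
    exists x, S x /\ exists eps, eps > 0 /\
      forall y, S y -> Rabs (y - x) < eps -> y = x.

Definition perfect (P : R -> Prop) : Prop :=
  closedR P /\
  forall x, P x -> forall eps, eps > 0 ->
    exists y, P y /\ y <> x /\ Rabs (y - x) < eps.

(* (a,b) ∈ I(A): for a compact A, the connected components of
   [min A, max A] \ A are exactly the open intervals (a,b) with
   a < b, a, b ∈ A and (a,b) ∩ A = ∅. *)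
Definition in_I (A : R -> Prop) (a b : R) : Prop :=
  a < b /\ A a /\ A b /\ forall x, a < x < b -> ~ A x.

Definition homotopy_cut_set {X : Type} (T : Topology X) (s t : R)
    (alpha beta : R -> X) (A : R -> Prop) : Prop :=
  (forall x, A x -> s <= x <= t) /\
  closedR A /\ nowhere_dense A /\ A s /\ A t /\
  (forall x, A x -> alpha x = beta x) /\
  (forall a b, in_I A a b -> path_homotopic T a b alpha beta).

Definition scattered_Pi1_products {X : Type} (T : Topology X) : Prop :=
  forall alpha beta : R -> X, path T 0 1 alpha -> path T 0 1 beta ->
    (exists A, scattered A /\ homotopy_cut_set T 0 1 alpha beta A) ->
    path_homotopic T 0 1 alpha beta.

(* Let P be the perfect kernel of A: the points of A every neighbourhood of
   which meets A in a non-scattered set.  If c < e are points of A with no point of P in between,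
   then A ∩ [c,e] is scattered, so after rescaling [c,e] affinely onto [0,1]
   the scattered Π1-products hypothesis gives α|[c,e] ≃ β|[c,e].  Both the
   gaps of B = P ∪ {0,1} and the intervals [c,a], [b,d] of the second clause
   are of this form. *)

From Stdlib Require Import Reals Lra Classical.
Open Scope R_scope.

Definition isolated_in (S : R -> Prop) (x : R) : Prop :=
  exists eps, eps > 0 /\ forall y, S y -> Rabs (y - x) < eps -> y = x.

Lemma not_closure_ball (P : R -> Prop) x :
  ~ closure P x -> exists eps, eps > 0 /\ forall y, P y -> eps <= Rabs (y - x).
Proof.
  intros Hx. apply NNPP; intros Hno. apply Hx. intros eps He.
  apply NNPP; intros Hfar. apply Hno. exists eps; split; auto.
  intros y Py. apply Rnot_lt_le; intros Hy. apply Hfar; eauto.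
Qed.

Lemma closure_sub (P Q : R -> Prop) x :
  (forall y, P y -> Q y) -> closure P x -> closure Q x.
Proof.
  intros HPQ Hx eps He. destruct (Hx eps He) as [y [Py Hy]]; eauto.
Qed.

Lemma closedR_point a : closedR (fun x => x = a).
Proof.
  intros x Hx. destruct (Req_dec x a) as [|Hne]; auto.
  assert (Hd : Rabs (x - a) > 0) by (apply Rabs_pos_lt; lra).
  destruct (Hx _ Hd) as [y [-> Hy]]. rewrite Rabs_minus_sym in Hy. lra.
Qed.

Lemma closedR_interval c e : closedR (fun x => c <= x <= e).
Proof.
  intros x Hx. split; apply Rnot_lt_le; intros Hout.
  - destruct (Hx (c - x)) as [y [Hy Hyx]]; [lra|].
    destruct (Rabs_def2 _ _ Hyx). lra.
  - destruct (Hx (x - e)) as [y [Hy Hyx]]; [lra|].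
    destruct (Rabs_def2 _ _ Hyx). lra.
Qed.

Lemma closedR_and (P Q : R -> Prop) :
  closedR P -> closedR Q -> closedR (fun x => P x /\ Q x).
Proof.
  intros HP HQ x Hx. split.
  - apply HP. apply (closure_sub _ _ x) with (2 := Hx). tauto.
  - apply HQ. apply (closure_sub _ _ x) with (2 := Hx). tauto.
Qed.

Lemma closedR_or (P Q : R -> Prop) :
  closedR P -> closedR Q -> closedR (fun x => P x \/ Q x).
Proof.
  intros HP HQ x Hx. destruct (classic (closure P x)) as [HPx|HPx]; [left; auto|].
  right. apply HQ. intros eps He.
  destruct (not_closure_ball P x HPx) as [e1 [He1 Hfar]].
  destruct (Hx (Rmin eps e1)) as [y [[Py|Qy] Hy]]; [apply Rmin_pos; lra| |].
  - pose proof (Hfar y Py). pose proof (Rmin_r eps e1). lra.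
  - exists y. split; auto. pose proof (Rmin_l eps e1). lra.
Qed.

Lemma nowhere_dense_sub (P Q : R -> Prop) :
  (forall x, P x -> Q x) -> nowhere_dense Q -> nowhere_dense P.
Proof.
  intros HPQ HQ [x [eps [He Hball]]]. apply HQ. exists x, eps. split; auto.
  intros y Hy. apply (closure_sub P); auto.
Qed.

Lemma scattered_sub (S S' : R -> Prop) :
  (forall x, S' x -> S x) -> scattered S -> scattered S'.
Proof. intros HS' HS U HU Hne. apply HS; auto. Qed.

Lemma closed_scattered_nowhere_dense S :
  closedR S -> scattered S -> nowhere_dense S.
Proof.
  intros Hcl Hsc [x [eps [He Hball]]].
  destruct (Hsc (fun y => Rabs (y - x) < eps)) as [z [Hz [d [Hd Hiso]]]].
  - intros y Hy. apply Hcl, Hball; auto.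
  - exists x. rewrite Rminus_diag, Rabs_R0. auto.
  - pose proof (Rmin_l d (eps - Rabs (z - x))).
    pose proof (Rmin_r d (eps - Rabs (z - x))).
    set (r := Rmin d (eps - Rabs (z - x))) in *.
    assert (Hr : r > 0) by (apply Rmin_pos; lra).
    assert (Hhalf : Rabs (r / 2) = r / 2) by (apply Rabs_pos_eq; lra).
    assert (z + r / 2 = z); [|lra].
    apply Hiso.
    + replace (z + r / 2 - x) with (r / 2 + (z - x)) by ring.
      eapply Rle_lt_trans; [apply Rabs_triang|]. lra.
    + replace (z + r / 2 - z) with (r / 2) by ring. lra.
Qed.

Definition perfect_kernel (A : R -> Prop) (x : R) : Prop :=
  A x /\ forall eps, eps > 0 -> ~ scattered (fun y => A y /\ Rabs (y - x) < eps).

Lemma isolated_in_of_not_perfect_kernel (A S : R -> Prop) w :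
  (forall z, S z -> A z) -> S w -> ~ perfect_kernel A w ->
  exists z, S z /\ isolated_in S z.
Proof.
  intros HSA Sw Hw.
  assert (Hsc : exists eps, eps > 0 /\ scattered (fun y => A y /\ Rabs (y - w) < eps)).
  { apply NNPP; intros Hno. apply Hw. split; [auto|].
    intros eps He Hs. apply Hno; eauto. }
  destruct Hsc as [eps [He Hsc]].
  destruct (Hsc (fun z => S z /\ Rabs (z - w) < eps))
    as [z [[Sz Hzw] [d [Hd Hiso]]]].
  - intros x [Sx Hx]; auto.
  - exists w. rewrite Rminus_diag, Rabs_R0. auto.
  - exists z. split; auto.
    pose proof (Rmin_l d (eps - Rabs (z - w))).
    pose proof (Rmin_r d (eps - Rabs (z - w))).
    exists (Rmin d (eps - Rabs (z - w))). split; [apply Rmin_pos; lra|].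
    intros y Sy Hy. apply Hiso; [split; auto|lra].
    replace (y - w) with ((y - z) + (z - w)) by ring.
    eapply Rle_lt_trans; [apply Rabs_triang|]. lra.
Qed.

Lemma perfect_kernel_sub A x : perfect_kernel A x -> A x.
Proof. intros [Ax _]; exact Ax. Qed.

Lemma closedR_perfect_kernel A : closedR A -> closedR (perfect_kernel A).
Proof.
  intros Hcl x Hx. split.
  - apply Hcl. apply (closure_sub _ _ x) with (2 := Hx). apply perfect_kernel_sub.
  - intros eps He Hs.
    destruct (Hx (eps / 2)) as [y [[Ay Hy] Hyx]]; [lra|].
    apply (Hy (eps / 2)); [lra|]. apply scattered_sub with (2 := Hs).
    intros z [Az Hzy]. split; auto.
    destruct (Rabs_def2 _ _ Hyx), (Rabs_def2 _ _ Hzy). apply Rabs_def1; lra.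
Qed.

Lemma perfect_perfect_kernel A : closedR A -> perfect (perfect_kernel A).
Proof.
  intros Hcl. split; [apply closedR_perfect_kernel; auto|].
  intros x [Ax Hx] eps He. apply NNPP; intros Hno. apply (Hx eps He).
  intros S HS [y0 Sy0].
  destruct (classic (exists w, S w /\ w <> x)) as [[w [Sw Hwx]]|Honly].
  - apply (isolated_in_of_not_perfect_kernel A S w); [firstorder|auto|].
    intros Hw. apply Hno. exists w. destruct (HS w Sw). auto.
  - exists y0. split; auto. exists 1. split; [lra|]. intros y Sy _.
    assert (y = x) by (apply NNPP; eauto).
    assert (y0 = x) by (apply NNPP; eauto). congruence.
Qed.

Lemma scattered_of_no_perfect_kernel A c e :
  c < e -> (forall x, c < x < e -> ~ perfect_kernel A x) ->
  scattered (fun x => A x /\ c <= x <= e).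
Proof.
  intros Hce Hgap S HS [y Sy].
  destruct (classic (exists w, S w /\ c < w < e)) as [[w [Sw Hw]]|Hends].
  - apply (isolated_in_of_not_perfect_kernel A S w); [firstorder|auto|auto].
  - assert (Hend : forall z, S z -> z = c \/ z = e).
    { intros z Sz. destruct (HS z Sz) as [_ [Hcz Hze]].
      destruct Hcz as [Hcz|]; [|auto]. destruct Hze as [Hze|]; [|auto].
      exfalso; eauto. }
    exists y. split; auto. exists (e - c). split; [lra|].
    intros z Sz Hzy. apply NNPP; intros Hne.
    destruct (Hend y Sy) as [-> | ->], (Hend z Sz) as [-> | ->];
      try congruence; rewrite ?Rminus_diag, ?Rabs_R0 in Hzy;
      [rewrite Rabs_pos_eq in Hzy|rewrite Rabs_left in Hzy]; lra.
Qed.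

Lemma Rabs_affine_lt k c x y eps :
  k > 0 -> Rabs (y - x) < eps / k -> Rabs ((k * y + c) - (k * x + c)) < eps.
Proof.
  intros Hk Hyx.
  replace ((k * y + c) - (k * x + c)) with (k * (y - x)) by ring.
  rewrite Rabs_mult, (Rabs_pos_eq k) by lra.
  replace eps with (k * (eps / k)) by (field; lra).
  apply Rmult_lt_compat_l; lra.
Qed.

Lemma scattered_affine_preimage (C : R -> Prop) k c :
  k > 0 -> scattered C -> scattered (fun t => C (k * t + c)).
Proof.
  intros Hk Hsc S HS [t0 St0].
  destruct (Hsc (fun z => exists t, S t /\ z = k * t + c))
    as [z [[t [St ->]] [d [Hd Hiso]]]].
  - intros z [t [St ->]]. apply HS; auto.
  - exists (k * t0 + c); eauto.
  - exists t. split; auto. exists (d / k). split; [apply Rdiv_lt_0_compat; lra|].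
    intros y Sy Hy.
    assert (k * y + c = k * t + c) by (apply Hiso; [eauto|apply Rabs_affine_lt; auto]).
    apply Rmult_eq_reg_l with k; lra.
Qed.

Lemma closedR_affine_preimage (C : R -> Prop) k c :
  k > 0 -> closedR C -> closedR (fun t => C (k * t + c)).
Proof.
  intros Hk Hcl x Hx. apply Hcl. intros eps He.
  destruct (Hx (eps / k)) as [y [Cy Hy]]; [apply Rdiv_lt_0_compat; lra|].
  exists (k * y + c). split; [auto|apply Rabs_affine_lt; auto].
Qed.

Lemma path_affine {X} (T : Topology X) (f : R -> X) k c :
  path T 0 1 f -> k > 0 -> 0 <= c -> k + c <= 1 ->
  path T 0 1 (fun t => f (k * t + c)).
Proof.
  intros [_ Hf] Hk Hc Hkc. split; [lra|]. intros U HU x Hx HUx.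
  destruct (Hf U HU (k * x + c)) as [eps [He Hnear]]; [split; nra|exact HUx|].
  exists (eps / k). split; [apply Rdiv_lt_0_compat; lra|].
  intros y Hy Hyx. apply Hnear; [split; nra|apply Rabs_affine_lt; auto].
Qed.

Lemma path_homotopic_affine {X} (T : Topology X) a b a' b' k c (f g : R -> X) :
  k > 0 -> a = k * a' + c -> b = k * b' + c -> path_homotopic T a b f g ->
  path_homotopic T a' b' (fun t => f (k * t + c)) (fun t => g (k * t + c)).
Proof.
  intros Hk -> -> [H [Hcont [H0 [H1 [Hl Hr]]]]].
  assert (Hin : forall x, a' <= x <= b' -> k * a' + c <= k * x + c <= k * b' + c)
    by (intros x Hx; split; nra).
  exists (fun x u => H (k * x + c) u). repeat split.
  - intros U HU x u Hx Hu HUx.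
    destruct (Hcont U HU (k * x + c) u) as [eps [He Hnear]]; auto.
    pose proof (Rmin_l eps (eps / k)). pose proof (Rmin_r eps (eps / k)).
    exists (Rmin eps (eps / k)).
    split; [apply Rmin_pos; [lra|apply Rdiv_lt_0_compat; lra]|].
    intros y v Hy Hv Hyx Hvu.
    apply Hnear; auto; [apply Rabs_affine_lt; auto|]; lra.
  - intros x Hx. apply H0; auto.
  - intros x Hx. apply H1; auto.
  - intros u Hu. apply Hl; auto.
  - intros u Hu. apply Hr; auto.
Qed.

Lemma path_homotopic_ext {X} (T : Topology X) a b (f1 g1 f2 g2 : R -> X) :
  a <= b -> (forall x, a <= x <= b -> f1 x = f2 x) ->
  (forall x, a <= x <= b -> g1 x = g2 x) ->
  path_homotopic T a b f1 g1 -> path_homotopic T a b f2 g2.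
Proof.
  intros Hab Ef Eg [H [Hcont [H0 [H1 [Hl Hr]]]]].
  exists H. repeat split; auto; intros.
  - rewrite <- Ef; auto.
  - rewrite <- Eg; auto.
  - rewrite <- Ef; [auto|lra].
  - rewrite <- Ef; [auto|lra].
Qed.

Lemma in_I_affine_preimage (C : R -> Prop) k c a' b' :
  k > 0 -> in_I (fun t => C (k * t + c)) a' b' -> in_I C (k * a' + c) (k * b' + c).
Proof.
  intros Hk [Hab [Ca [Cb Hgap]]]. repeat split; auto; [nra|].
  intros x Hx Cx. apply (Hgap ((x - c) / k)).
  - split; apply (Rmult_lt_reg_l k); auto; field_simplify; lra.
  - replace (k * ((x - c) / k) + c) with x by (field; lra). auto.
Qed.

Lemma scattered_Pi1_products_sub {X} (T : Topology X) (f g : R -> X) c e C :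
  scattered_Pi1_products T -> path T 0 1 f -> path T 0 1 g ->
  0 <= c -> c < e -> e <= 1 ->
  scattered C -> homotopy_cut_set T c e f g C -> path_homotopic T c e f g.
Proof.
  intros HX Hf Hg Hc Hce He Hsc [Cbnd [Ccl [_ [Cc [Ce [Ceq Cgap]]]]]].
  set (k := e - c). assert (Hk : k > 0) by (unfold k; lra).
  set (C' := fun t => C (k * t + c)).
  assert (Hsc' : scattered C') by (apply scattered_affine_preimage; auto).
  assert (Hcl' : closedR C') by (apply closedR_affine_preimage; auto).
  assert (Hunit : path_homotopic T 0 1 (fun t => f (k * t + c)) (fun t => g (k * t + c))).
  { apply HX; [apply path_affine; auto; unfold k; lra
              |apply path_affine; auto; unfold k; lra|].
    exists C'. split; auto.
    refine (conj _ (conj Hcl' (conj _ (conj _ (conj _ (conj _ _)))))).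
    - intros t Ct. destruct (Cbnd _ Ct).
      split; apply (Rmult_le_reg_l k); unfold k in *; lra.
    - apply closed_scattered_nowhere_dense; auto.
    - unfold C'. replace (k * 0 + c) with c by ring; auto.
    - unfold C'. replace (k * 1 + c) with e by (unfold k; ring); auto.
    - intros t Ct. apply Ceq; auto.
    - intros a' b' Hab'. apply path_homotopic_affine with (k * a' + c) (k * b' + c); auto.
      apply Cgap, in_I_affine_preimage; auto. }
  (* rescale back with the inverse map t |-> t / k - c / k *)
  assert (Hback := path_homotopic_affine T 0 1 c e (1 / k) (- c / k) _ _
                     ltac:(apply Rdiv_lt_0_compat; lra)
                     ltac:(field; lra) ltac:(unfold k; field; lra) Hunit).
  apply (path_homotopic_ext T c e _ _ _ _ (Rlt_le _ _ Hce)) with (3 := Hback);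
    intros x _; f_equal; field; lra.
Qed.

Section ScatteredGaps.

Variables (X : Type) (T : Topology X).
Hypothesis HX : scattered_Pi1_products T.
Variables alpha beta : R -> X.
Hypotheses (Ha : path T 0 1 alpha) (Hb : path T 0 1 beta).
Variable A : R -> Prop.
Hypothesis HA : homotopy_cut_set T 0 1 alpha beta A.

Lemma path_homotopic_of_no_perfect_kernel c e :
  c < e -> A c -> A e -> (forall x, c < x < e -> ~ perfect_kernel A x) ->
  path_homotopic T c e alpha beta.
Proof.
  destruct HA as [Abnd [Acl [And [_ [_ [Aeq Agap]]]]]].
  intros Hce Ac Ae Hgap. destruct (Abnd c Ac), (Abnd e Ae).
  set (C := fun x => A x /\ c <= x <= e).
  apply (scattered_Pi1_products_sub T alpha beta c e C); auto; try lra.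
  { apply scattered_of_no_perfect_kernel; auto. }
  refine (conj _ (conj _ (conj _ (conj _ (conj _ (conj _ _)))))).
  - intros x [_ Hx]; exact Hx.
  - apply closedR_and; [auto|apply closedR_interval].
  - apply nowhere_dense_sub with A; [firstorder|auto].
  - split; [auto|lra].
  - split; [auto|lra].
  - intros x [Ax _]; auto.
  - intros a b [Hab [[Aa Ha'] [[Ab Hb'] Hout]]]. apply Agap.
    repeat split; auto. intros x Hx Ax. apply (Hout x Hx). split; auto; lra.
Qed.

End ScatteredGaps.

Theorem mainTheorem15 (X : Type) (T : Topology X)
  (HX : scattered_Pi1_products T)
  (alpha beta : R -> X) (Ha : path T 0 1 alpha) (Hb : path T 0 1 beta)
  (A : R -> Prop) (HA : homotopy_cut_set T 0 1 alpha beta A) :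
  path_homotopic T 0 1 alpha beta \/
  exists P : R -> Prop,
    perfect P /\ (forall x, P x -> A x) /\
    homotopy_cut_set T 0 1 alpha beta (fun x => P x \/ x = 0 \/ x = 1) /\
    (forall c d a b,
       in_I (fun x => P x \/ x = 0 \/ x = 1) c d -> in_I A a b ->
       c <= a -> b <= d ->
       (c < a -> path_homotopic T c a alpha beta) /\
       (b < d -> path_homotopic T b d alpha beta)).
Proof.
  pose proof HA as [Abnd [Acl [And [A0 [A1 [Aeq _]]]]]].
  pose proof (path_homotopic_of_no_perfect_kernel X T HX alpha beta Ha Hb A HA) as Hgap.
  set (B := fun x => perfect_kernel A x \/ x = 0 \/ x = 1).
  assert (BA : forall x, B x -> A x) by (intros x [[Ax _]|[->| ->]]; auto).
  right. exists (perfect_kernel A). fold B.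
  refine (conj (perfect_perfect_kernel A Acl) (conj (perfect_kernel_sub A) (conj _ _))).
  - refine (conj _ (conj _ (conj _ (conj _ (conj _ (conj _ _)))))).
    + intros x Bx. apply Abnd, BA; auto.
    + repeat apply closedR_or; auto using closedR_perfect_kernel, closedR_point.
    + apply nowhere_dense_sub with A; auto.
    + right; left; auto.
    + right; right; auto.
    + intros x Bx. apply Aeq, BA; auto.
    + intros c d [Hcd [Bc [Bd Hout]]]. apply Hgap; auto.
      intros x Hx Px. apply (Hout x Hx). left; auto.
  - intros c d a b [Hcd [Bc [Bd Hout]]] [Hab [Aa [Ab _]]] Hca Hbd.
    split; intros Hlt; apply Hgap; auto;
      intros x Hx Px; apply (Hout x); [lra|left; auto|lra|left; auto].
Qed.
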